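(* Let $\boldsymbol{f}\in\mathbb{R}^E$ satisfy $\boldsymbol{u}^-_e<\boldsymbol{f}_e<\boldsymbol{u}^+_e$ for all $e$ and $\boldsymbol{c}^\top\boldsymbol{f}>F^*$. Let $\tilde{\boldsymbol{g}}\in\mathbb{R}^E$ satisfy $\|\mathbf{L}(\boldsymbol{f})^{-1}(\tilde{\boldsymbol{g}}-\boldsymbol{g}(\boldsymbol{f}))\|_\infty\le\varepsilon$ for some $\varepsilon\in(0,1/2]$, and $\tilde{\boldsymbol{\ell}}\in\mathbb{R}^E_{>0}$ satisfy $\tilde{\boldsymbol{\ell}}\approx_2\boldsymbol{\ell}(\boldsymbol{f})$. Let $\boldsymbol{\Delta}$ satisfy $\mathbf{B}^\top\boldsymbol{\Delta}=0$ and $\tilde{\boldsymbol{g}}^\top\boldsymbol{\Delta}/\|\tilde{\mathbf{L}}\boldsymbol{\Delta}\|_1\le-\kappa$ for some $\kappa\in(0,1)$. Then $\frac{|\boldsymbol{c}^\top\boldsymbol{\Delta}|}{\boldsymbol{c}^\top\boldsymbol{f}-F^*}\le|\tilde{\boldsymbol{g}}^\top\boldsymbol{\Delta}|/(\kappa m)$.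
   Context: Setting: $G=(V,E)$ is a directed graph with $m=|E|$ edges and edge-vertex incidence matrix $\mathbf{B}$ (row of edge $(a,b)$ has $+1$ at $a$, $-1$ at $b$); demands $\boldsymbol{d}\in\mathbb{Z}^V$, lower/upper capacities $\boldsymbol{u}^-,\boldsymbol{u}^+\in\mathbb{Z}^E$, and costs $\boldsymbol{c}\in\mathbb{Z}^E$ are integers bounded in absolute value by $U$. $F^*=\min\{\boldsymbol{c}^\top\boldsymbol{f}:\mathbf{B}^\top\boldsymbol{f}=\boldsymbol{d},\ \boldsymbol{u}^-\le\boldsymbol{f}\le\boldsymbol{u}^+\}$. Let $\alpha=1/(1000\log(mU))$. Lengths $\boldsymbol{\ell}(\boldsymbol{f})_e=(\boldsymbol{u}^+_e-\boldsymbol{f}_e)^{-1-\alpha}+(\boldsymbol{f}_e-\boldsymbol{u}^-_e)^{-1-\alpha}$; gradients $\boldsymbol{g}(\boldsymbol{f})_e=20m(\boldsymbol{c}^\top\boldsymbol{f}-F^* )^{-1}\boldsymbol{c}_e+\alpha(\boldsymbol{u}^+_e-\boldsymbol{f}_e)^{-1-\alpha}-\alpha(\boldsymbol{f}_e-\boldsymbol{u}^-_e)^{-1-\alpha}$ (the gradient of $\Phi(\boldsymbol{f})=20m\log(\boldsymbol{c}^\top\boldsymbol{f}-F^* )+\sum_e((\boldsymbol{u}^+_e-\boldsymbol{f}_e)^{-\alpha}+(\boldsymbol{f}_e-\boldsymbol{u}^-_e)^{-\alpha})$). $\mathbf{L}(\boldsymbol{f})=\mathrm{diag}(\boldsymbol{\ell}(\boldsymbol{f}))$,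 $\tilde{\mathbf{L}}=\mathrm{diag}(\tilde{\boldsymbol{\ell}})$. $\boldsymbol{x}\approx_\beta\boldsymbol{y}$ means $\beta^{-1}\boldsymbol{y}_i\le\boldsymbol{x}_i\le\beta\boldsymbol{y}_i$ for all $i$. *)

From HB Require Import structures.
From mathcomp Require Import all_boot all_order all_algebra.
From mathcomp Require Import reals exp.
Set Implicit Arguments. Unset Strict Implicit. Unset Printing Implicit Defensive.
Import Order.TTheory GRing.Theory Num.Theory.
Local Open Scope ring_scope.

(* Graph with vertex set 'I_n and edge set 'I_m; edge e goes from tl e to hd e.
   Incidence matrix B : row e has +1 at tl e and -1 at hd e. *)
Definition incidence (R : realType) (m n : nat) (tl hd : 'I_m -> 'I_n)
  (e : 'I_m) (v : 'I_n) : R := ((v == tl e)%:R - (v == hd e)%:R).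

Definition BT (R : realType) (m n : nat) (tl hd : 'I_m -> 'I_n)
  (f : 'I_m -> R) (v : 'I_n) : R := \sum_(e < m) incidence R tl hd e v * f e.

Definition dot (R : realType) (m : nat) (x y : 'I_m -> R) : R :=
  \sum_(e < m) x e * y e.

Definition intv (R : realType) (m : nat) (x : 'I_m -> int) : 'I_m -> R :=
  fun e => (x e)%:~R.

Definition feasible (R : realType) (m n : nat) (tl hd : 'I_m -> 'I_n)
  (d : 'I_n -> int) (lo hi : 'I_m -> int) (f : 'I_m -> R) : Prop :=
  (forall v, BT tl hd f v = (d v)%:~R) /\
  (forall e, (lo e)%:~R <= f e <= (hi e)%:~R).

Definition is_opt_value (R : realType) (m n : nat) (tl hd : 'I_m -> 'I_n)
  (d : 'I_n -> int) (lo hi c : 'I_m -> int) (Fs : R) : Prop :=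
  (exists f, feasible tl hd d lo hi f /\ dot (intv R c) f = Fs) /\
  (forall f, feasible tl hd d lo hi f -> Fs <= dot (intv R c) f).

Definition alpha (R : realType) (m U : nat) : R :=
  1 / (1000 * ln ((m * U)%:R)).

Definition ell (R : realType) (m U : nat) (lo hi : 'I_m -> int)
  (f : 'I_m -> R) (e : 'I_m) : R :=
  powR ((hi e)%:~R - f e) (-1 - alpha R m U) +
  powR (f e - (lo e)%:~R) (-1 - alpha R m U).

Definition grad (R : realType) (m U : nat) (lo hi c : 'I_m -> int) (Fs : R)
  (f : 'I_m -> R) (e : 'I_m) : R :=
  20 * m%:R * (dot (intv R c) f - Fs)^-1 * (c e)%:~R
  + alpha R m U * powR ((hi e)%:~R - f e) (-1 - alpha R m U)
  - alpha R m U * powR (f e - (lo e)%:~R) (-1 - alpha R m U).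

Definition approx (R : realType) (m : nat) (beta : R) (x y : 'I_m -> R) : Prop :=
  forall i, beta^-1 * y i <= x i <= beta * y i.

Definition wnorm1 (R : realType) (m : nat) (w x : 'I_m -> R) : R :=
  \sum_(e < m) `|w e * x e|.

(* Writing K = 20 m / (c^T f - Fs), the gradient is K c plus a barrier term
   bounded entrywise by alpha * l(f), so |gt - K c| <= (eps + alpha) l(f).
   Summing against Delta and using l(f) <= 2 lt gives
   |gt^T Delta - K c^T Delta| <= 2 (eps + alpha) ||lt Delta||_1
                             <= 2 (eps + alpha) |gt^T Delta| / kappa,
   hence kappa K |c^T Delta| <= (kappa + 2 eps + 2 alpha) |gt^T Delta|.
   As alpha <= 1, eps <= 1/2 and kappa < 1, the factor is at most 20. *)

From HB Require Import structures.
From mathcomp Require Import all_boot all_order all_algebra.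
From mathcomp Require Import reals exp.
From mathcomp Require Import ring lra.
Set Implicit Arguments. Unset Strict Implicit. Unset Printing Implicit Defensive.
Import Order.TTheory GRing.Theory Num.Theory.
Local Open Scope ring_scope.

Section Alpha.
Variable R : realType.

Lemma ln_ge_half (x : R) : 2 <= x -> 1 / 2 <= ln x.
Proof.
move=> x2; have x0 : 0 < x by lra.
(* ln (1 + (1/x - 1)) <= 1/x - 1 reads ln x >= 1 - 1/x. *)
have := @le_ln1Dx R (x^-1 - 1).
rewrite addrCA subrr addr0 lnV ?posrE //.
have ix0 : 0 < x^-1 by rewrite invr_gt0.
have ix : x^-1 <= 1 / 2 by rewrite mul1r lef_pV2 ?posrE //; lra.
by move/(_ ltac:(lra)); lra.
Qed.

Lemma ln_natr_ge0 (k : nat) : 0 <= ln (k%:R : R).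
Proof.
case: k => [|k]; first by rewrite ln0.
by rewrite ln_ge0 // ler1n.
Qed.

Lemma alpha_ge0 (m U : nat) : 0 <= alpha R m U.
Proof. by rewrite /alpha divr_ge0 // mulr_ge0 // ln_natr_ge0. Qed.

Lemma alpha_le1 (m U : nat) : alpha R m U <= 1.
Proof.
rewrite /alpha; case: (leqP 2 (m * U)) => [mU2 | mU1].
  have := @ln_ge_half ((m * U)%:R); rewrite ler_nat => /(_ mU2) lnmU.
  by rewrite ler_pdivrMr; lra.
(* [ln 0 = ln 1 = 0] and [1 / 0 = 0]: alpha vanishes. *)
suff -> : ln ((m * U)%:R : R) = 0 by rewrite mulr0 invr0 mulr0.
by move: mU1; case: (m * U)%N => [|[|//]] _; [exact: ln0 | exact: ln1].
Qed.

End Alpha.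

Section DescentDirection.
Variables (R : realType) (m : nat).
Implicit Types (g v w x y z : 'I_m -> R).

Lemma wnorm1_ge0 w z : 0 <= wnorm1 w z.
Proof. by apply: sumr_ge0 => e _; exact: normr_ge0. Qed.

Lemma dot_dist_le (delta : R) w x y z : 0 <= delta -> (forall e, 0 <= w e) ->
  (forall e, `|x e - y e| <= delta * w e) ->
  `|dot x z - dot y z| <= delta * wnorm1 w z.
Proof.
move=> delta0 w0 xy; rewrite /dot -sumrB mulr_sumr.
apply: (le_trans (ler_norm_sum _ _ _)); apply: ler_sum => e _.
rewrite -mulrBl normrM normrM (ger0_norm (w0 e)) mulrA.
by rewrite ler_wpM2r.
Qed.

Lemma wnorm1_approx (beta : R) w v z : 0 < beta -> (forall e, 0 <= v e) ->
  approx beta w v -> wnorm1 v z <= beta * wnorm1 w z.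
Proof.
move=> beta0 v0 wv; rewrite /wnorm1 mulr_sumr; apply: ler_sum => e _.
have vw : v e <= beta * w e by rewrite -ler_pdivrMl //; case/andP: (wv e).
have w0 : 0 <= w e by rewrite -(pmulr_rge0 _ beta0); exact: le_trans vw.
rewrite !normrM (ger0_norm (v0 e)) (ger0_norm w0) mulrA.
by rewrite ler_wpM2r.
Qed.

Section Descent.
Variables (g w z : 'I_m -> R) (kappa : R).
Hypotheses (kappa_gt0 : 0 < kappa) (descent : dot g z / wnorm1 w z <= - kappa).

Lemma descent_wnorm1_gt0 : 0 < wnorm1 w z.
Proof.
rewrite lt_def wnorm1_ge0 andbT; apply: contraTneq descent => ->.
by rewrite invr0 mulr0 -ltNge oppr_lt0.
Qed.

Lemma descent_wnorm1_le : kappa * wnorm1 w z <= `|dot g z|.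
Proof.
have := descent; rewrite ler_pdivrMr ?descent_wnorm1_gt0 // => gz.
have kW : 0 <= kappa * wnorm1 w z by rewrite mulr_ge0 ?wnorm1_ge0 ?ltW.
by rewrite ler0_norm; lra.
Qed.

Lemma descent_dot_le (c l : 'I_m -> R) (K delta : R) :
  0 <= K -> 0 <= delta -> (forall e, 0 <= l e) -> approx 2 w l ->
  (forall e, `|g e - K * c e| <= delta * l e) ->
  kappa * (K * `|dot c z|) <= (kappa + 2 * delta) * `|dot g z|.
Proof.
move=> K0 delta0 l0 wl gKc.
have Kcz : dot (fun e => K * c e) z = K * dot c z.
  by rewrite /dot mulr_sumr; apply: eq_bigr => e _; rewrite mulrA.
have err : `|dot g z - K * dot c z| <= delta * (2 * wnorm1 w z).
  rewrite -Kcz; apply: le_trans (dot_dist_le z delta0 l0 gKc) _.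
  by rewrite ler_wpM2l // wnorm1_approx.
have tri : K * `|dot c z| <= `|dot g z| + `|dot g z - K * dot c z|.
  rewrite -{1}(ger0_norm K0) -normrM.
  by have := ler_distD (dot g z) (K * dot c z) 0; rewrite !subr0 distrC addrC.
have kW := ler_wpM2l delta0 descent_wnorm1_le.
have := ler_wpM2l (ltW kappa_gt0) tri; have := ler_wpM2l (ltW kappa_gt0) err.
lra.
Qed.

End Descent.

End DescentDirection.

Section Gradient.
Variables (R : realType) (m U : nat) (lo hi c : 'I_m -> int) (Fs : R).
Variables (f : 'I_m -> R) (e : 'I_m).
Hypothesis f_interior : (lo e)%:~R < f e < (hi e)%:~R.

Lemma ell_gt0 : 0 < ell U lo hi f e.
Proof. by case/andP: f_interior => lof fhi; rewrite addr_gt0 // powR_gt0 // subr_gt0. Qed.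

Lemma grad_approx_le (gt eps : R) :
  `|(ell U lo hi f e)^-1 * (gt - grad U lo hi c Fs f e)| <= eps ->
  `|gt - grad U lo hi c Fs f e| <= eps * ell U lo hi f e.
Proof. by rewrite normrM gtr0_norm ?invr_gt0 ?ell_gt0 // ler_pdivrMl ?ell_gt0 // mulrC. Qed.

Lemma grad_sub_cost_le :
  `|grad U lo hi c Fs f e - 20 * m%:R * (dot (intv R c) f - Fs)^-1 * (c e)%:~R|
    <= alpha R m U * ell U lo hi f e.
Proof.
rewrite /grad addrAC [_ * _ + _]addrC addrK -mulrBr normrM ger0_norm ?alpha_ge0 //.
rewrite ler_wpM2l ?alpha_ge0 //; apply: le_trans (ler_normB _ _) _.
by rewrite !ger0_norm ?powR_ge0.
Qed.

End Gradient.

Theorem lemma4p8 (R : realType) (n m U : nat) (tl hd : 'I_m -> 'I_n)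
  (d : 'I_n -> int) (lo hi c : 'I_m -> int)
  (Hd : forall v, `|d v| <= U%:Z) (Hlo : forall e, `|lo e| <= U%:Z)
  (Hhi : forall e, `|hi e| <= U%:Z) (Hc : forall e, `|c e| <= U%:Z)
  (Fs : R) (HFs : is_opt_value tl hd d lo hi c Fs)
  (f : 'I_m -> R) (Hf : forall e, (lo e)%:~R < f e < (hi e)%:~R)
  (Hgap : Fs < dot (intv R c) f)
  (gt : 'I_m -> R) (eps : R) (Heps : 0 < eps <= 1 / 2)
  (Hgt : forall e, `|(ell U lo hi f e)^-1 * (gt e - grad U lo hi c Fs f e)| <= eps)
  (lt : 'I_m -> R) (Hlt_pos : forall e, 0 < lt e)
  (Hlt : approx 2 lt (ell U lo hi f))
  (Delta : 'I_m -> R) (HDelta : forall v, BT tl hd Delta v = 0)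
  (kappa : R) (Hkappa : 0 < kappa < 1)
  (Hdesc : dot gt Delta / wnorm1 lt Delta <= - kappa) :
  `|dot (intv R c) Delta| / (dot (intv R c) f - Fs)
    <= `|dot gt Delta| / (kappa * m%:R).
Proof.
case: (posnP m) => [m0 | m_gt0]; first by subst m; rewrite /dot !big_ord0 normr0 !mul0r.
case/andP: Heps => eps_gt0 eps_le; case/andP: Hkappa => kappa_gt0 kappa_lt1.
set gap := dot (intv R c) f - Fs; have gap_gt0 : 0 < gap by rewrite subr_gt0.
set K := 20 * m%:R * gap^-1.
have K_ge0 : 0 <= K by rewrite !mulr_ge0 // invr_ge0 ltW.
have al_ge0 := @alpha_ge0 R m U; have al_le1 := @alpha_le1 R m U.
have gt_cost e : `|gt e - K * intv R c e| <= (eps + alpha R m U) * ell U lo hi f e.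
  apply: le_trans (ler_distD (grad U lo hi c Fs f e) _ _) _.
  by rewrite mulrDl lerD ?grad_approx_le ?grad_sub_cost_le.
have delta_ge0 : 0 <= eps + alpha R m U by rewrite addr_ge0 // ltW.
have key := descent_dot_le kappa_gt0 Hdesc K_ge0 delta_ge0
  (fun e => ltW (ell_gt0 U (Hf e))) Hlt gt_cost.
have coef : (kappa + 2 * (eps + alpha R m U)) * `|dot gt Delta| <= 20 * `|dot gt Delta|.
  by rewrite ler_wpM2r //; lra.
have m_pos : 0 < m%:R :> R by rewrite ltr0n.
rewrite ler_pdivlMr ?mulr_gt0 //.
suff -> : `|dot (intv R c) Delta| / gap * (kappa * m%:R)
  = (kappa * (K * `|dot (intv R c) Delta|)) / 20.
  by rewrite ler_pdivrMr // [_ * 20]mulrC; exact: le_trans key coef.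
by rewrite /K; field; rewrite gt_eqF.
Qed.
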